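(* Let $q\in(0,1)$ and let $W\in\{0,1\}^{I\times I}$ have zero diagonal and satisfy $W\mathbf{1}=W^*\mathbf{1}$; let $d_{\max}=\max_{j\in I}\sum_{i\in I}W_{ij}$. Consider the Broadcast Gossip Algorithm: at each time $t$, independently of the past, a node $j$ is drawn uniformly from $I$; then $x_i(t+1)=(1-q)x_i(t)+qx_j(t)$ for every $i$ with $W_{ij}=1$, and $x_i(t+1)=x_i(t)$ otherwise. Then for every $t\ge0$, $$\mathbb{E}[(\bar x(t)-\bar x(0))^2]\le\frac{q\,d_{\max}}{q\,d_{\max}+N(1-q)}V(x(0)).$$
   Context: $I$ is a finite set of $N$ nodes, $x(0)\in\mathbb{R}^I$ deterministic. $\mathbf{1}$ is the all-ones vector, $W^*$ the transpose. For $y\in\mathbb{R}^I$, $\bar y=\frac1N\sum_i y_i$ and $V(y)=\frac1N\sum_i(y_i-\bar y)^2$. *)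

(* the statement is purely algebraic once the expectation
   over the i.i.d. uniform node choices is written as a finite average. *)
From HB Require Import structures.
From mathcomp Require Import all_boot all_order all_algebra.
Set Implicit Arguments. Unset Strict Implicit. Unset Printing Implicit Defensive.
Import Order.TTheory GRing.Theory Num.Theory.
Local Open Scope ring_scope.

Section BGA.
Variables (R : realFieldType) (I : finType).

Definition avg (y : I -> R) : R := (\sum_i y i) / #|I|%:R.

Definition Var (y : I -> R) : R := (\sum_i (y i - avg y) ^+ 2) / #|I|%:R.

Definition bga_step (q : R) (W : I -> I -> bool) (x : I -> R) (j : I) : I -> R :=
  fun i => if W i j then (1 - q) * x i + q * x j else x i.

Definition bga_run (q : R) (W : I -> I -> bool) (x0 : I -> R) (s : seq I) : I -> R :=
  foldl (bga_step q W) x0 s.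

(* Expectation of f(x(t)) when the t broadcasting nodes are drawn independently
   and uniformly from I: average over all t-tuples of nodes. *)
Definition bga_expect (q : R) (W : I -> I -> bool) (x0 : I -> R) (t : nat)
  (f : (I -> R) -> R) : R :=
  (\sum_(s : t.-tuple I) f (bga_run q W x0 s)) / (#|I| ^ t)%:R.

Definition dmax (W : I -> I -> bool) : nat := \max_j \sum_i (W i j : nat).

End BGA.

From HB Require Import structures.
From mathcomp Require Import all_boot all_order all_algebra.
From mathcomp Require Import ring lra.
Set Implicit Arguments. Unset Strict Implicit. Unset Printing Implicit Defensive.
Import Order.TTheory GRing.Theory Num.Theory.
Local Open Scope ring_scope.

(* Fix the reference value a = avg x(0) and, for a constant c in [0,1], the
   potential
       Psi_c(x) = (1 - c) (avg x - a)^2 + c/N sum_i (x_i - a)^2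
                = (avg x - a)^2 + c Var x.
   With c = q dmax / (q dmax + N (1 - q)), Psi_c is superharmonic for one
   gossip step: averaging Psi_c(step x j) over the broadcaster j gives at most
   Psi_c(x).  Indeed, when j broadcasts, the sum of the states moves by
   q * flux x j while the sum of squared deviations drops by q (1-q) times the
   disagreement seen by j's neighbours; by balance of W the fluxes average to
   zero, and by Cauchy-Schwarz their squares are controlled by dmax times the
   total disagreement.  The choice of c makes the two effects cancel exactly.
   Iterating, E[Psi_c(x(t))] <= Psi_c(x(0)) = c Var x(0), and the theorem
   follows from (avg x - a)^2 <= Psi_c(x). *)

Definition balanced (I : finType) (W : I -> I -> bool) : Prop :=
  forall i, (\sum_j (W i j : nat) = \sum_j (W j i : nat))%N.

Lemma balanced_sum_diff (R : realFieldType) (I : finType) (W : I -> I -> bool)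
    (f : I -> R) :
  balanced W -> \sum_j \sum_i (W i j : nat)%:R * (f j - f i) = 0 :> R.
Proof.
move=> hb.
have -> : \sum_j \sum_i (W i j : nat)%:R * (f j - f i) =
    \sum_j f j * \sum_i (W i j : nat)%:R - \sum_j \sum_i (W i j : nat)%:R * f i :> R.
  rewrite -sumrB; apply: eq_bigr => j _; rewrite mulr_sumr -sumrB.
  by apply: eq_bigr => i _; rewrite mulrBr mulrC.
apply/eqP; rewrite subr_eq0 exchange_big /=; apply/eqP; apply: eq_bigr => i _.
by rewrite -mulr_suml mulrC -!natr_sum hb.
Qed.

(* Weighted Cauchy-Schwarz inequality for nonnegative weights, obtained from
   the Lagrange identity sum_{i,k} w_i w_k (v_i - v_k)^2 >= 0. *)
Lemma weighted_cauchy_schwarz (R : realFieldType) (I : finType) (w v : I -> R) :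
  (forall i, 0 <= w i) ->
  (\sum_i w i * v i) ^+ 2 <= (\sum_i w i) * (\sum_i w i * v i ^+ 2).
Proof.
move=> w_ge0.
have lagrange_ge0 : 0 <= \sum_i \sum_k w i * w k * (v i - v k) ^+ 2.
  apply: sumr_ge0 => i _; apply: sumr_ge0 => k _.
  by rewrite mulr_ge0 ?sqr_ge0 ?mulr_ge0.
have lagrange : \sum_i \sum_k w i * w k * (v i - v k) ^+ 2 =
    (\sum_i w i * v i ^+ 2) * (\sum_k w k) + (\sum_i w i) * (\sum_k w k * v k ^+ 2)
    - 2 * ((\sum_i w i * v i) * (\sum_k w k * v k)).
  rewrite !mulr_suml mulr_sumr -!big_split -sumrB /=; apply: eq_bigr => i _.
  rewrite !mulr_sumr -!big_split -sumrB /=; apply: eq_bigr => k _; ring.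
move: lagrange_ge0; rewrite lagrange expr2; lra.
Qed.

Lemma Var_shift (R : realFieldType) (I : finType) (y : I -> R) (a : R) :
  (0 < #|I|)%N ->
  Var y = (\sum_i (y i - a) ^+ 2) / #|I|%:R - (avg y - a) ^+ 2.
Proof.
move=> hN; have N_neq0 : (#|I|%:R : R) != 0 by rewrite pnatr_eq0 -lt0n.
rewrite /Var; set m := avg y.
have sum_y : \sum_i y i = m * #|I|%:R by rewrite /m /avg mulfVK.
clearbody m.
have -> : \sum_i (y i - m) ^+ 2 = \sum_i (y i - a) ^+ 2
    - 2 * (m - a) * \sum_i (y i - a) + \sum_(i : I) (m - a) ^+ 2.
  rewrite mulr_sumr -sumrB -big_split /=; apply: eq_bigr => i _; ring.
by rewrite sumrB sum_y !sumr_const; field.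
Qed.

Lemma Var_ge0 (R : realFieldType) (I : finType) (y : I -> R) : 0 <= Var y.
Proof. by rewrite divr_ge0 ?ler0n // sumr_ge0 // => i _; rewrite sqr_ge0. Qed.

Lemma sum_tupleS (R : realFieldType) (I : finType) (t : nat)
    (F : t.+1.-tuple I -> R) :
  \sum_(s : t.+1.-tuple I) F s = \sum_j \sum_(s : t.-tuple I) F [tuple of j :: s].
Proof.
rewrite pair_bigA /=.
rewrite (reindex (fun p : I * t.-tuple I => [tuple of p.1 :: p.2])) //=.
exists (fun s : t.+1.-tuple I => (thead s, [tuple of behead s])).
  by move=> [j s] _ /=; rewrite theadE; congr pair; apply: val_inj.
move=> s _; apply: val_inj.
by case: s => [[|j s] //= _].
Qed.

Section Gossip.
Variables (R : realFieldType) (I : finType) (q : R) (W : I -> I -> bool).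
Implicit Types (x : I -> R) (j : I) (t : nat).

Local Notation N := (#|I|%:R : R).
Local Notation step := (bga_step q W).
Local Notation expect := (bga_expect q W).

Local Notation w i j := ((W i j : nat)%:R : R).

Lemma expectS x t (f : (I -> R) -> R) :
  expect x t.+1 f = (\sum_j expect (step x j) t f) / N.
Proof.
rewrite /bga_expect sum_tupleS -mulr_suml expnS natrM invfM mulrA.
by rewrite mulrAC.
Qed.

Lemma expect_le x t (f g : (I -> R) -> R) :
  (forall y, f y <= g y) -> expect x t f <= expect x t g.
Proof.
move=> le_fg; rewrite /bga_expect ler_wpM2r ?invr_ge0 ?ler0n //.
exact: ler_sum.
Qed.

Lemma expect_superharmonic (F : (I -> R) -> R) :
  (forall x, (\sum_j F (step x j)) / N <= F x) ->
  forall t x, expect x t F <= F x.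
Proof.
move=> F_super; elim=> [|t IH] x.
  rewrite /bga_expect expn0 divr1 (big_pred1 (nil_tuple I)) // => s.
  by apply/esym/eqP; apply: tuple0.
rewrite expectS; apply: le_trans (F_super x).
by rewrite ler_wpM2r ?invr_ge0 ?ler0n //; apply: ler_sum => j _.
Qed.

(* Change of the sum of the states, divided by q, when j broadcasts. *)
Definition flux x j : R := \sum_i w i j * (x j - x i).

Definition disagreement x : R := \sum_j \sum_i w i j * (x j - x i) ^+ 2.

Lemma sum_step x j : \sum_i step x j i = \sum_i x i + q * flux x j.
Proof.
rewrite /flux mulr_sumr -big_split; apply: eq_bigr => i _ /=.
by rewrite /bga_step; case: (W i j) => /=; ring.
Qed.

Lemma avg_step x j : (0 < #|I|)%N -> avg (step x j) = avg x + q / N * flux x j.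
Proof.
move=> hN; have N_neq0 : N != 0 by rewrite pnatr_eq0 -lt0n.
by rewrite /avg sum_step; field.
Qed.

(* Node-wise effect of a broadcast on the squared deviations from a: each
   neighbour i of j trades part of its deviation for j's, at the cost of a
   q (1 - q) fraction of the squared gap between them. *)
Lemma sum_sq_step x a j :
  \sum_i (step x j i - a) ^+ 2 = \sum_i (x i - a) ^+ 2
    + \sum_i w i j * (q * ((x j - a) ^+ 2 - (x i - a) ^+ 2)
                     - q * (1 - q) * (x j - x i) ^+ 2).
Proof.
rewrite -big_split; apply: eq_bigr => i _ /=.
by rewrite /bga_step; case: (W i j) => /=; ring.
Qed.

Hypothesis W_balanced : balanced W.

Lemma sum_sq_step_avg x a :
  \sum_j \sum_i (step x j i - a) ^+ 2
    = N * \sum_i (x i - a) ^+ 2 - q * (1 - q) * disagreement x.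
Proof.
under eq_bigr do rewrite sum_sq_step.
rewrite big_split sumr_const; congr (_ + _); first by rewrite mulr_natl.
transitivity (q * \sum_j \sum_i w i j * ((x j - a) ^+ 2 - (x i - a) ^+ 2)
              - q * (1 - q) * disagreement x).
  rewrite /disagreement !mulr_sumr -sumrB; apply: eq_bigr => j _.
  by rewrite !mulr_sumr -sumrB; apply: eq_bigr => i _; ring.
by rewrite (balanced_sum_diff (fun k => (x k - a) ^+ 2)) // mulr0 sub0r.
Qed.

Lemma sum_flux x : \sum_j flux x j = 0.
Proof. exact: balanced_sum_diff. Qed.

Lemma sum_sq_flux x : \sum_j flux x j ^+ 2 <= (dmax W)%:R * disagreement x.
Proof.
rewrite /disagreement mulr_sumr; apply: ler_sum => j _.
have w_ge0 i : 0 <= w i j by apply: ler0n.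
apply: le_trans (weighted_cauchy_schwarz (fun i => x j - x i) w_ge0) _.
apply: ler_wpM2r.
  by apply: sumr_ge0 => i _; rewrite mulr_ge0 ?sqr_ge0.
by rewrite -natr_sum ler_nat; exact: (@leq_bigmax _ (fun j => (\sum_i (W i j : nat))%N) j).
Qed.

(* On average over the broadcaster, the squared deviation of the mean from a
   grows only through the squared fluxes, the linear term vanishing by balance. *)
Lemma sum_sq_avg_step x a : (0 < #|I|)%N ->
  \sum_j (avg (step x j) - a) ^+ 2
    = N * (avg x - a) ^+ 2 + (q / N) ^+ 2 * \sum_j flux x j ^+ 2.
Proof.
move=> hN; under eq_bigr do rewrite avg_step //.
rewrite (eq_bigr (fun j => (avg x - a) ^+ 2 + 2 * (avg x - a) * (q / N) * flux x j
    + (q / N) ^+ 2 * flux x j ^+ 2)) => [|j _]; last by ring.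
by rewrite !big_split /= sumr_const -!mulr_sumr sum_flux mulr0 addr0 mulr_natl.
Qed.

(* The Lyapunov potential, in the form convenient for one-step averaging. *)
Definition potential (c a : R) x : R :=
  (1 - c) * (avg x - a) ^+ 2 + c / N * \sum_i (x i - a) ^+ 2.

Lemma potentialE c a x : (0 < #|I|)%N ->
  potential c a x = (avg x - a) ^+ 2 + c * Var x.
Proof. by move=> hN; rewrite /potential (Var_shift x a hN); ring. Qed.

Definition gain : R := q * (dmax W)%:R / (q * (dmax W)%:R + N * (1 - q)).

Hypotheses (N_gt0 : (0 < #|I|)%N) (q_gt0 : 0 < q) (q_lt1 : q < 1).

Lemma gain_bounds : 0 <= gain <= 1.
Proof.
have N_pos : 0 < N by rewrite ltr0n.
have qD_ge0 : 0 <= q * (dmax W)%:R by rewrite mulr_ge0 ?ler0n ?ltW.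
have Nq_gt0 : 0 < N * (1 - q) by rewrite mulr_gt0 // subr_gt0.
rewrite divr_ge0 ?ler_pdivrMr ?mul1r /=; lra.
Qed.

(* The defining property of the gain: the growth of the squared mean deviation,
   bounded through dmax, exactly offsets the decrease of the squared spread. *)
Lemma gain_balance :
  (1 - gain) * (q / N) ^+ 2 * (dmax W)%:R = gain * q * (1 - q) / N.
Proof.
have N_pos : 0 < N by rewrite ltr0n.
have qD_ge0 : 0 <= q * (dmax W)%:R by rewrite mulr_ge0 ?ler0n ?ltW.
have Nq_gt0 : 0 < N * (1 - q) by rewrite mulr_gt0 // subr_gt0.
rewrite /gain; field; rewrite ?gt_eqF //; lra.
Qed.

Lemma potential_superharmonic a x :
  (\sum_j potential gain a (step x j)) / N <= potential gain a x.
Proof.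
have N_pos : 0 < N by rewrite ltr0n.
have /andP[_ gain_le1] := gain_bounds.
have split_potential : \sum_j potential gain a (step x j) =
    (1 - gain) * \sum_j (avg (step x j) - a) ^+ 2
    + gain / N * \sum_j \sum_i (step x j i - a) ^+ 2.
  by rewrite big_split /= -!mulr_sumr.
rewrite split_potential sum_sq_avg_step // sum_sq_step_avg /potential.
set M := avg x - a; set S := \sum_i (x i - a) ^+ 2.
set F := \sum_j flux x j ^+ 2; set Q := disagreement x.
have -> : ((1 - gain) * (N * M ^+ 2 + (q / N) ^+ 2 * F)
    + gain / N * (N * S - q * (1 - q) * Q)) / N
    = ((1 - gain) * M ^+ 2 + gain / N * S)
      + ((1 - gain) * (q / N) ^+ 2 * F - gain * q * (1 - q) / N * Q) / N.
  by field; rewrite gt_eqF.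
rewrite gerDl pmulr_lle0 ?invr_gt0 // subr_le0 -gain_balance -[X in _ <= X]mulrA.
apply: ler_wpM2l; last exact: sum_sq_flux.
by rewrite mulr_ge0 ?subr_ge0 ?sqr_ge0.
Qed.

End Gossip.

Theorem mainTheorem11 (R : realFieldType) (I : finType) (q : R)
  (W : I -> I -> bool) (x0 : I -> R) :
  (0 < #|I|)%N ->
  0 < q -> q < 1 ->
  (forall i, W i i = false) ->
  (forall i, (\sum_j (W i j : nat) = \sum_j (W j i : nat))%N) ->
  forall t : nat,
    bga_expect q W x0 t (fun x => (avg x - avg x0) ^+ 2)
    <= (q * (dmax W)%:R) / (q * (dmax W)%:R + #|I|%:R * (1 - q)) * Var x0.
Proof.
move=> hN q_gt0 q_lt1 _ hb t.
have /andP[gain_ge0 _] := gain_bounds W hN q_gt0 q_lt1.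
apply: le_trans (_ : bga_expect q W x0 t (potential (gain q W) (avg x0)) <= _).
  apply: expect_le => y; rewrite potentialE // lerDl.
  by rewrite mulr_ge0 ?Var_ge0.
have -> : gain q W * Var x0 = potential (gain q W) (avg x0) x0.
  by rewrite potentialE // subrr expr0n add0r.
apply: expect_superharmonic => x.
exact: potential_superharmonic hb hN q_gt0 q_lt1 _ _.
Qed.
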